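(* Let $P\ll Q$ be probability measures, $E$ measurable, $q:=Q(E)$, and $V:=\mathrm{VC}(P\Vert Q)$. Then $$P(E)\le\frac{V(1-q)+2q+\sqrt{V\big(V+8q(1-q)\big)}}{V+2}.$$
   Context: The Vincze–Le Cam divergence is the $f$-divergence $\mathrm{VC}(P\Vert Q):=D_f(P\Vert Q)=\int f(\mathrm dP/\mathrm dQ)\,\mathrm dQ$ with $f(t)=\frac{2-2t}{t+1}$ (equivalently $\int\frac{(\mathrm dP/\mathrm dQ-1)^2}{\mathrm dP/\mathrm dQ+1}\,\mathrm dQ$). *)

From HB Require Import structures.
From mathcomp Require Import all_boot all_order all_algebra.
From mathcomp Require Import all_classical all_reals all_analysis.
Set Implicit Arguments. Unset Strict Implicit. Unset Printing Implicit Defensive.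
Import Order.TTheory GRing.Theory Num.Theory.
Local Open Scope ring_scope.
Local Open Scope classical_set_scope.
Local Open Scope charge_scope.

Definition vc_gen (R : realType) (t : R) : R := (2 - 2 * t) / (t + 1).

(* f-divergence D_f(P||Q) = \int f(dP/dQ) dQ, where dP/dQ is the library's
   Radon--Nikodym derivative (real-valued when P << Q). *)
Definition f_div (d : measure_display) (T : measurableType d) (R : realType)
    (f : R -> R) (P Q : probability T R) : \bar R :=
  (\int[Q]_x (f (fine (('d (charge_of_finite_measure P) '/d Q) x)))%:E)%E.

Definition VC (d : measure_display) (T : measurableType d) (R : realType)
    (P Q : probability T R) : \bar R := f_div (@vc_gen R) P Q.

(** Since [vc_gen t + 2 = 4 / (1 + t)] and [1 / x >= 2 k - k^2 x] for [x > 0],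
    integrating against [Q] over a set [A] and optimising in [k] gives the
    Cauchy--Schwarz estimate
    [4 Q(A)^2 <= (Q(A) + P(A)) * \int_A (vc_gen (dP/dQ) + 2) dQ].
    Used for [A = E] and [A = ~` E], this bounds [V] from below by the
    Vincze--Le Cam divergence of the two-point laws [(p, 1 - p)] and [(q, 1 - q)]
    (data processing); clearing denominators, [s := p + q] satisfies a quadratic inequality
    whose larger root is [q] plus the claimed bound. *)

From mathcomp Require Import all_boot all_order all_algebra.
From mathcomp Require Import all_classical all_reals all_analysis.
From mathcomp Require Import measurable_realfun ring lra.
Import Order.TTheory GRing.Theory Num.Theory.
Local Open Scope ring_scope.
Local Open Scope classical_set_scope.

Lemma sqr_le_mul_of_quadratic_minorant {R : realFieldType} (a b c : R) :
  0 <= a -> (forall k, 2 * k * b - k ^+ 2 * a <= c) -> b ^+ 2 <= a * c.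
Proof.
move=> a_ge0 minor; have [a0|a_neq0] := eqVneq a 0.
  rewrite a0 mul0r; have [->|b_neq0] := eqVneq b 0; first by rewrite expr0n.
  have := minor ((`|c| + 1) / (2 * b)).
  have -> : 2 * ((`|c| + 1) / (2 * b)) * b - ((`|c| + 1) / (2 * b)) ^+ 2 * a
            = `|c| + 1 by rewrite a0; field.
  by have := ler_norm c; lra.
have a_gt0 : 0 < a by rewrite lt_def a_neq0.
have := minor (b / a).
have -> : 2 * (b / a) * b - (b / a) ^+ 2 * a = b ^+ 2 / a by field.
by rewrite ler_pdivrMr // mulrC.
Qed.

Lemma le_quadratic_root {R : rcfType} [a b c s : R] :
  0 < a -> a * s ^+ 2 - 2 * b * s + c <= 0 ->
  s <= (b + Num.sqrt (b ^+ 2 - a * c)) / a.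
Proof.
move=> a_gt0 quad; rewrite ler_pdivlMr //.
have sqr_le : (a * s - b) ^+ 2 <= b ^+ 2 - a * c.
  have -> : (a * s - b) ^+ 2 = b ^+ 2 - a * c + a * (a * s ^+ 2 - 2 * b * s + c).
    by ring.
  by rewrite gerDl mulr_ge0_le0 // ltW.
have : a * s - b <= Num.sqrt (b ^+ 2 - a * c).
  by apply: le_trans (ler_norm _) _; rewrite -sqrtr_sqr ler_wsqrtr.
lra.
Qed.

Lemma vc_bound_of_cells {R : rcfType} (p q X Y V : R) :
  0 <= p <= 1 -> 0 <= q <= 1 -> 0 <= X -> 0 <= Y ->
  4 * q ^+ 2 <= (q + p) * X -> 4 * (1 - q) ^+ 2 <= ((1 - q) + (1 - p)) * Y ->
  V + 2 = X + Y ->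
  p <= (V * (1 - q) + 2 * q + Num.sqrt (V * (V + 8 * q * (1 - q)))) / (V + 2).
Proof.
move=> /andP[p0 p1] /andP[q0 q1] X0 Y0 cellE cellC VXY.
have W_gt0 : 0 < V + 2.
  rewrite VXY lt_def addr_ge0 // andbT.
  apply/negP => /eqP XY0; have [X00 Y00] : X = 0 /\ Y = 0 by lra.
  have := sqr_ge0 (q - 1 / 2).
  by move: cellE cellC; rewrite X00 Y00 !mulr0 !expr2; lra.
have quad : (V + 2) * (q + p) ^+ 2 - 2 * (V + 4 * q) * (q + p) + 8 * q ^+ 2 <= 0.
  have hE : 4 * q ^+ 2 * (2 - (q + p)) <= (q + p) * X * (2 - (q + p)).
    by apply: ler_wpM2r => //; lra.
  have hC : 4 * (1 - q) ^+ 2 * (q + p) <= ((1 - q) + (1 - p)) * Y * (q + p).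
    by apply: ler_wpM2r => //; lra.
  have -> : V = X + Y - 2 by lra.
  by move: hE hC; rewrite !expr2; lra.
have := le_quadratic_root W_gt0 quad.
have -> : (V + 4 * q) ^+ 2 - (V + 2) * (8 * q ^+ 2) = V * (V + 8 * q * (1 - q)).
  by ring.
rewrite !ler_pdivlMr //; lra.
Qed.

Lemma measurable_inv (R : realType) : measurable_fun [set: R] (@GRing.inv R).
Proof.
have -> : [set: R] = [set x | x != 0] `|` [set 0].
  by apply/seteqP; split => x //= _; case: (eqVneq x 0) => [->|x0]; [right|left].
apply/measurable_funU => //; first by apply: open_measurable; exact: open_neq.
split.
  apply: open_continuous_measurable_fun; first exact: open_neq.
  by move=> x; rewrite inE /= => x0; exact: inv_continuous.
move=> _ Y mY; have [Y0|Y0] := pselect (Y 0^-1).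
  rewrite (_ : _ `&` _ = [set 0]) //.
  by apply/seteqP; split => x /=; [case|move=> ->].
by rewrite (_ : _ `&` _ = set0) //; apply/seteqP; split => x //= [->].
Qed.

Lemma measurable_vc_gen (R : realType) : measurable_fun [set: R] (@vc_gen R).
Proof.
apply: measurable_funM.
  by apply: measurable_funB => //; exact: measurable_funM.
exact: measurableT_comp (measurable_inv R) (measurable_funD _ _).
Qed.

Lemma vc_gen_bound {R : realType} {t : R} : 0 <= t -> `|vc_gen t| <= 2.
Proof.
move=> t0; have t1 : 0 < t + 1 by lra.
by rewrite ler_norml /vc_gen ler_pdivlMr // ler_pdivrMr //; apply/andP; split; lra.
Qed.

Lemma vc_gen_tangent {R : realType} {t : R} (k : R) : 0 <= t ->
  8 * k - 4 * k ^+ 2 * (1 + t) <= vc_gen t + 2.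
Proof.
move=> t0; have t1 : 0 < t + 1 by lra.
suff : 8 * k - 4 * k ^+ 2 * (1 + t) - 2 <= vc_gen t by lra.
rewrite /vc_gen ler_pdivlMr //.
by have := sqr_ge0 (k * (t + 1) - 1); rewrite !expr2; nra.
Qed.

Lemma fine_probability_ge0_le1 d (T : measurableType d) (R : realType)
    (P : probability T R) (A : set T) :
  measurable A -> 0 <= fine (P A) <= 1.
Proof.
move=> mA; rewrite fine_ge0 //=.
by rewrite -lee_fin fineK ?fin_num_measure //; exact: probability_le1.
Qed.

Lemma fine_probability_setC d (T : measurableType d) (R : realType)
    (P : probability T R) (A : set T) :
  measurable A -> fine (P (~` A)) = 1 - fine (P A).
Proof. by move=> mA; rewrite probability_setC // fineB // fin_num_measure. Qed.

Section vincze_le_cam_cells.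
Context {d : measure_display} {T : measurableType d} {R : realType}.
Context {P Q : probability T R}.
Hypothesis PQ : P `<< Q.

(* The derivative ['d P '/d Q] used in [VC] is only a.e. nonnegative; this
   version of it is nonnegative everywhere and agrees with it [Q]-a.e. *)
Let density x := fine (Radon_Nikodym_SigmaFinite.f P Q x).
Let vc_plus2 x := vc_gen (density x) + 2.

Let EFin_density : EFin \o density = Radon_Nikodym_SigmaFinite.f P Q.
Proof.
by apply/funext => x /=; rewrite fineK // Radon_Nikodym_SigmaFinite.f_fin_num.
Qed.

Let density_ge0 x : 0 <= density x.
Proof. by rewrite fine_ge0 // Radon_Nikodym_SigmaFinite.f_ge0. Qed.

Let integrable_density A : measurable A -> Q.-integrable A (EFin \o density).
Proof.
move=> mA; rewrite EFin_density.
exact: integrableS (Radon_Nikodym_SigmaFinite.f_integrable PQ).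
Qed.

Let measurable_density : measurable_fun setT density.
Proof.
apply/measurable_EFinP; rewrite EFin_density.
exact: measurable_int (Radon_Nikodym_SigmaFinite.f_integrable PQ).
Qed.

Let probability_density A :
  measurable A -> fine (P A) = \int[Q]_(x in A) density x.
Proof.
by move=> mA; rewrite (Radon_Nikodym_SigmaFinite.f_integral PQ) // -EFin_density.
Qed.

Let vc_plus2_ge0 x : 0 <= vc_plus2 x.
Proof.
by have := vc_gen_bound (density_ge0 x); rewrite ler_norml /vc_plus2; lra.
Qed.

Let integrable_vc_density A :
  measurable A -> Q.-integrable A (EFin \o (@vc_gen R \o density)).
Proof.
move=> mA; apply: measurable_bounded_integrable => //.
- exact: (le_lt_trans (probability_le1 Q mA) (ltey _)).
- have := measurableT_comp (measurable_vc_gen R) measurable_density.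
  exact: measurable_funS.
- exists 2; split => // M M2 x _ /=.
  by apply: le_trans (vc_gen_bound (density_ge0 x)) _; apply: ltW.
Qed.

Let integrable_vc_plus2 A : measurable A -> Q.-integrable A (EFin \o vc_plus2).
Proof.
move=> mA; have -> : EFin \o vc_plus2 =
                     (EFin \o (@vc_gen R \o density)) \+ (EFin \o cst 2).
  by apply/funext => x; rewrite /= EFinD.
apply: integrableD => //; first exact: integrable_vc_density.
exact: finite_measure_integrable_cst.
Qed.

Let integrable_scaled_density c A :
  measurable A -> Q.-integrable A (EFin \o (fun x => c * density x)).
Proof.
move=> mA; have -> : EFin \o (fun x => c * density x) =
                     (fun x => c%:E * (EFin \o density) x)%E.
  by apply/funext => x; rewrite /= EFinM.
by apply: integrableZl => //; exact: integrable_density.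
Qed.

Let integrable_affine_density a c A :
  measurable A -> Q.-integrable A (EFin \o (fun x => a + c * density x)).
Proof.
move=> mA; have -> : EFin \o (fun x => a + c * density x) =
                     (EFin \o cst a) \+ (EFin \o (fun x => c * density x)).
  by apply/funext => x; rewrite /= EFinD.
apply: integrableD => //; first exact: finite_measure_integrable_cst.
exact: integrable_scaled_density.
Qed.

Lemma Rintegral_vc_plus2_ge0 A : 0 <= \int[Q]_(x in A) vc_plus2 x.
Proof. by apply: Rintegral_ge0 => x _; exact: vc_plus2_ge0. Qed.

Lemma fine_VC_add2 [E : set T] : measurable E ->
  fine (VC P Q) + 2 =
  \int[Q]_(x in E) vc_plus2 x + \int[Q]_(x in ~` E) vc_plus2 x.
Proof.
move=> mE; rewrite -Rintegral_setU //; last 3 first.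
- exact: measurableC.
- by rewrite setUv; exact: integrable_vc_plus2.
- exact/disj_setPCl.
rewrite setUv RintegralD //; last 2 first.
- exact: integrable_vc_density.
- exact: finite_measure_integrable_cst.
rewrite Rintegral_cst //.
have -> : fine (Q setT) = 1 by rewrite probability_setT.
rewrite mulr1; congr (_ + _); rewrite /VC /f_div /Rintegral; congr fine.
apply: ae_eq_integral => //.
- apply/measurable_EFinP; apply: measurableT_comp; first exact: measurable_vc_gen.
  exact: measurableT_comp.
- exact/measurable_EFinP/(measurableT_comp (measurable_vc_gen R)).
- apply: filterS (ae_eq_Radon_Nikodym_SigmaFinite PQ measurableT) => x fx _.
  by rewrite /density fx.
Qed.

Lemma vc_cell_bound [A : set T] : measurable A ->
  4 * fine (Q A) ^+ 2 <= (fine (Q A) + fine (P A)) * \int[Q]_(x in A) vc_plus2 x.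
Proof.
move=> mA; set q := fine (Q A); set p := fine (P A).
suff : (4 * q) ^+ 2 <= (4 * (q + p)) * \int[Q]_(x in A) vc_plus2 x.
  by rewrite !expr2; lra.
apply: sqr_le_mul_of_quadratic_minorant => [|k].
  by rewrite mulr_ge0 // addr_ge0 // fine_ge0.
have -> : 2 * k * (4 * q) - k ^+ 2 * (4 * (q + p)) =
          \int[Q]_(x in A) ((8 * k - 4 * k ^+ 2) + (- 4 * k ^+ 2) * density x).
  rewrite RintegralD //; last 2 first.
  - exact: finite_measure_integrable_cst.
  - exact: integrable_scaled_density.
  rewrite Rintegral_cst // RintegralZl //; last exact: integrable_density.
  by rewrite /p probability_density // -/q; ring.
apply: le_Rintegral => //.
- exact: integrable_affine_density.
- exact: integrable_vc_plus2.
- by move=> x _; have := vc_gen_tangent k (density_ge0 x); rewrite /vc_plus2; lra.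
Qed.

End vincze_le_cam_cells.

Theorem mainTheorem19 (d : measure_display) (T : measurableType d)
    (R : realType) (P Q : probability T R) (E : set T) :
  P `<< Q -> measurable E ->
  let q := fine (Q E) in
  let V := fine (VC P Q) in
  fine (P E) <= (V * (1 - q) + 2 * q + Num.sqrt (V * (V + 8 * q * (1 - q))))
                / (V + 2).
Proof.
move=> PQ mE; have mEC := measurableC mE.
have cellC := vc_cell_bound PQ mEC.
rewrite !fine_probability_setC // in cellC.
apply: vc_bound_of_cells (vc_cell_bound PQ mE) cellC (fine_VC_add2 PQ mE).
- exact: fine_probability_ge0_le1.
- exact: fine_probability_ge0_le1.
- exact: Rintegral_vc_plus2_ge0.
- exact: Rintegral_vc_plus2_ge0.
Qed.
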